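(* Let $P$ be a finite up-regular order and let $R$ be its relatively maximum full trunk (which exists). Then $\mathrm{Height}(P\setminus R)\le \tfrac12\,\mathrm{Height}(P)$, where $P\setminus R$ denotes the induced suborder on $\mathrm{Dom}(P)\setminus R$.
   Context: Orders are partial orders; $x\sim y$ means $x\ne y$ and $x,y$ incomparable. For a finite order $Q$, $\mathrm{Height}(Q)$ is the maximum cardinality of a chain of $Q$ (0 if $Q$ is empty), and $\mathrm{Level}(x)=\sup\{\mathrm{Level}(y)+1:y<x\}$. An element $x$ of $P$ is up-regular if for all $y,z$ with $\mathrm{Level}(x)<\mathrm{Level}(y)=\mathrm{Level}(z)$ we have $x<y\iff x<z$; $P$ is up-regular if all its elements are. A trunk of $P$ is a subset $T$ such that for pairwise distinct $x,y,z\in T$, $x\sim y$ and $y\sim z$ imply $x\sim z$. A chain is maximum if it has maximum cardinality; a full trunk is a trunk containing a maximum chain; the relatively maximum full trunk is the full trunk that is the unique inclusion-maximal full trunk. *)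

From HB Require Import structures.
From mathcomp Require Import all_boot all_order.
Set Implicit Arguments. Unset Strict Implicit. Unset Printing Implicit Defensive.
Import Order.Theory.
Local Open Scope order_scope.

Section Defs.
Context {d : Order.disp_t} {T : finPOrderType d}.

Definition incomp (x y : T) : bool := (x != y) && ~~ (x >=< y).

Definition is_chain (C : {set T}) : bool :=
  [forall x in C, forall y in C, x >=< y].

(* Height of the induced suborder on A: max cardinality of a chain inside A *)
Definition Height (A : {set T}) : nat :=
  (\max_(C : {set T} | (C \subset A) && is_chain C) #|C|)%N.

(* Level x = sup { Level y + 1 : y < x } (sup of empty set = 0),
   computed by structural recursion with sufficient fuel #|T|. *)
Fixpoint level_fuel (n : nat) (x : T) : nat :=
  match n with
  | 0 => 0
  | n'.+1 => (\max_(y : T | (y < x)%O) (level_fuel n' y).+1)%N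
  end.
Definition Level (x : T) : nat := level_fuel #|T| x.

Definition up_regular_elt (x : T) : Prop :=
  forall y z : T, (Level x < Level y)%N -> Level y = Level z -> (x < y) = (x < z).

Definition up_regular : Prop := forall x : T, up_regular_elt x.

Definition is_trunk (R : {set T}) : Prop :=
  forall x y z : T, x \in R -> y \in R -> z \in R ->
    x != y -> y != z -> x != z ->
    incomp x y -> incomp y z -> incomp x z.

Definition is_max_chain (C : {set T}) : Prop :=
  is_chain C /\ #|C| = Height [set: T].

Definition is_full_trunk (R : {set T}) : Prop :=
  is_trunk R /\ exists C : {set T}, is_max_chain C /\ C \subset R.

Definition is_maximal_full_trunk (R : {set T}) : Prop :=
  is_full_trunk R /\ forall S : {set T}, is_full_trunk S -> R \subset S -> S = R.

Definition is_rel_max_full_trunk (R : {set T}) : Prop :=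
  is_maximal_full_trunk R /\ forall S : {set T}, is_maximal_full_trunk S -> S = R.

End Defs.

From HB Require Import structures.
From mathcomp Require Import all_boot all_order zify.
Import Order.Theory.
Set Implicit Arguments. Unset Strict Implicit. Unset Printing Implicit Defensive.

(* Call x "top-regular" when x lies below every element of
   strictly higher level, and let G be the set of top-regular elements.
   - Level theory: Level x is the length of a longest chain ending at x,
     minus one; it is strictly monotone, bounded by Height - 1, and a
     maximum chain meets every level 0 .. Height-1 exactly once.
   - In an up-regular order every full trunk is contained in G: a point x of
     a full trunk is comparable to the element c' of the maximum chain on
     the next higher level (otherwise x, c' and the chain element on x's
     level violate the trunk axiom), hence x < c', and up-regularity
     propagates x < y to every y of higher level.
   - G itself is a full trunk (incomparable points of G share a level), so
     G is the unique maximal full trunk, i.e. the relatively maximum one.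
   - If x is not in G, up-regularity forces x to be below NO element of
     level Level x + 1; thus along a chain avoiding G the levels jump by at
     least 2, and the levels l, l+1 of its elements are 2 |D| distinct
     numbers below Height. *)

Section Levels.
Context {d : Order.disp_t} {T : finPOrderType d}.
Implicit Types (x y z : T) (A C D : {set T}).
Local Notation lf := (@level_fuel d T).

Lemma is_chainP C : reflect {in C &, forall x y, (x >=< y)%O} (is_chain C).
Proof.
apply: (iffP forallP) => [H x y xC yC | H x].
  by move/implyP: (H x) => /(_ xC) /forallP /(_ y) /implyP; apply.
by apply/implyP => xC; apply/forallP => y; apply/implyP; exact: H.
Qed.

Lemma chain_set1 x : is_chain [set x].
Proof. by apply/is_chainP => a b /set1P-> /set1P->; exact: comparablexx. Qed.

Lemma chainU1_top x C : is_chain C -> {in C, forall z, (z <= x)%O} -> is_chain (x |: C).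
Proof.
move=> /is_chainP Cc Cle; apply/is_chainP => a b /setU1P[->|aC] /setU1P[->|bC].
- exact: comparablexx.
- by rewrite /Order.comparable Cle ?orbT.
- by rewrite /Order.comparable Cle.
- exact: Cc.
Qed.

Lemma chain_lt_or C x y : is_chain C -> x \in C -> y \in C -> x != y ->
  (x < y)%O || (y < x)%O.
Proof.
move=> /is_chainP Cc xC yC.
by case/comparable_ltgtP: (Cc x y xC yC) => // ->; rewrite eqxx.
Qed.

Lemma chain_le_Height A C : C \subset A -> is_chain C -> #|C| <= Height A.
Proof. by move=> CA Cc; apply: (leq_bigmax_cond C); rewrite CA Cc. Qed.

Lemma Height_witness A : exists C, [/\ C \subset A, is_chain C & #|C| = Height A].
Proof.
have [|C /andP[CA Cc] E] :=
  @eq_bigmax_cond _ (fun C : {set T} => (C \subset A) && is_chain C) (fun C => #|C|).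
  by apply/card_gt0P; exists set0; rewrite unfold_in /= sub0set; apply/is_chainP => a; rewrite inE.
by exists C; rewrite /Height E.
Qed.

Lemma level_fuel_le n x : lf n x <= n.
Proof. by elim: n x => [|n IH] x //=; apply/bigmax_leqP => y _; exact: IH. Qed.

Lemma level_fuel_mono n x : lf n x <= lf n.+1 x.
Proof.
elim: n x => [|n IH] x //=; apply/bigmax_leqP => y yx.
by apply: leq_trans (leq_bigmax_cond y yx); exact: IH.
Qed.

Lemma level_fuel_stable n x : lf n x != n -> lf n.+1 x <= lf n x.
Proof.
elim: n x => [|n IH] x //= Hne; apply/bigmax_leqP => y yx.
have Hy : (lf n y).+1 <= lf n.+1 x by exact: (leq_bigmax_cond y yx).
case: (eqVneq (lf n y) n) => Hyn; last exact: leq_ltn_trans (IH _ Hyn) Hy.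
have := level_fuel_le n.+1 x; move: Hy Hne; rewrite Hyn /= => Hy Hne Hle.
by move: Hne; rewrite eqn_leq Hle Hy.
Qed.

Lemma level_fuel_chain n x : exists C,
  [/\ is_chain C, x \in C, {in C, forall z, (z <= x)%O} & #|C| = (lf n x).+1].
Proof.
have single y : exists C,
    [/\ is_chain C, y \in C, {in C, forall z, (z <= y)%O} & #|C| = 1].
  by exists [set y]; rewrite chain_set1 set11 cards1; split=> // z /set1P->.
elim: n x => [|n IH] x /=; first exact: single.
case: (pickP (fun y => (y < x)%O)) => [y0 y0x|nobelow].
  2: by rewrite big_pred0 //; exact: single.
have [|y yx ->] := @eq_bigmax_cond _ (fun y => (y < x)%O) (fun y => (lf n y).+1).
  by apply/card_gt0P; exists y0.
have [C [Cc yC Cle Ccard]] := IH y.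
have Cle_x : {in C, forall z, (z <= x)%O} by move=> z /Cle zy; exact: le_trans zy (ltW yx).
have xC : x \notin C by apply/negP => /Cle xy; move: (lt_le_trans yx xy); rewrite ltxx.
exists (x |: C); split; [exact: chainU1_top | exact: setU11 | | by rewrite cardsU1 xC Ccard].
by move=> z /setU1P[->|/Cle_x].
Qed.

Lemma level_fuel_lt_card n x : lf n x < #|T|.
Proof. by have [C [_ _ _ <-]] := level_fuel_chain n x; exact: max_card. Qed.

Lemma Level_rec x : Level x = \max_(y | (y < x)%O) (Level y).+1.
Proof.
have -> : Level x = lf #|T|.+1 x.
  by apply/eqP; rewrite eqn_leq level_fuel_mono level_fuel_stable // neq_ltn level_fuel_lt_card.
by [].
Qed.

Lemma lt_Level x y : (x < y)%O -> Level x < Level y.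
Proof. by move=> xy; rewrite (Level_rec y); exact: (leq_bigmax_cond x xy). Qed.

Lemma Level_lt_Height x : Level x < Height [set: T].
Proof.
have [C [Cc _ _ Ccard]] := level_fuel_chain #|T| x.
by rewrite -ltnS -[Level x]/(lf #|T| x) -Ccard ltnS chain_le_Height ?subsetT.
Qed.

Lemma Level_down y k : k <= Level y -> exists z, (z <= y)%O /\ Level z = k.
Proof.
move: {2}(Level y) (leqnn (Level y)) => m; elim: m y => [|m IH] y Hy Hk.
  by exists y; split=> //; apply/eqP; rewrite eqn_leq Hk (leq_trans Hy).
case: (eqVneq k (Level y)) => [->|Hne]; first by exists y.
have Hlt : k < Level y by rewrite ltn_neqAle Hne.
case: (pickP (fun z => (z < y)%O)) => [y0 y0y|nobelow]; last first.
  by move: Hlt; rewrite Level_rec big_pred0.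
have [|z zy Heq] := @eq_bigmax_cond _ (fun z => (z < y)%O) (fun z => (Level z).+1).
  by apply/card_gt0P; exists y0.
rewrite Level_rec Heq in Hy Hlt.
have [w [wz wk]] := IH z Hy Hlt.
by exists w; split=> //; exact: le_trans wz (ltW zy).
Qed.

Lemma comparable_Level_lt x y : (x >=< y)%O -> Level x < Level y -> (x < y)%O.
Proof.
case/comparable_ltgtP => // [yx|->]; last by rewrite ltnn.
by move=> /(ltn_trans (lt_Level yx)); rewrite ltnn.
Qed.

Lemma same_Level_incomp x y : x != y -> Level x = Level y -> incomp x y.
Proof.
move=> xy Hl; rewrite /incomp xy /=; apply/negP => /comparable_ltgtP[] H.
- by move: (lt_Level H); rewrite Hl ltnn.
- by move: (lt_Level H); rewrite Hl ltnn.
- by rewrite H eqxx in xy.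
Qed.

Lemma chain_Level_inj C : is_chain C -> {in C &, injective Level}.
Proof.
move=> Cc x y xC yC Hl; apply/eqP/negPn/negP => xy.
by case/orP: (chain_lt_or Cc xC yC xy) => /lt_Level; rewrite Hl ltnn.
Qed.

Lemma max_chain_ex : exists C, is_max_chain C.
Proof. by have [C [_ Cc Ccard]] := Height_witness [set: T]; exists C. Qed.

Lemma max_chain_cover C : is_max_chain C ->
  forall k, k < Height [set: T] -> exists2 c, c \in C & Level c = k.
Proof.
move=> [Cc Ccard] k Hk.
have U : uniq (map Level (enum C)).
  by rewrite map_inj_in_uniq ?enum_uniq // => a b; rewrite !mem_enum; exact: chain_Level_inj.
have Sub : {subset map Level (enum C) <= iota 0 (Height [set: T])}.
  by move=> n /mapP[c _ ->]; rewrite mem_iota add0n Level_lt_Height.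
have Hsize : size (iota 0 (Height [set: T])) <= size (map Level (enum C)).
  by rewrite size_map size_iota -cardE Ccard.
have [_ E] := uniq_min_size U Sub Hsize.
have : k \in iota 0 (Height [set: T]) by rewrite mem_iota.
by rewrite -E => /mapP[c]; rewrite mem_enum => cC ->; exists c.
Qed.

Lemma max_chain_full_trunk C : is_max_chain C -> is_full_trunk C.
Proof.
move=> HC; split; last by exists C.
move=> x y z xC yC _ _ _ _ /andP[_]; by rewrite (is_chainP _ HC.1 x y xC yC).
Qed.

Definition top_regular : {set T} :=
  [set x | [forall y, (Level x < Level y) ==> (x < y)%O]].

Lemma top_regularP x y : x \in top_regular -> Level x < Level y -> (x < y)%O.
Proof. by rewrite inE => /forallP /(_ y) /implyP. Qed.

Lemma top_regular_incomp_Level x y :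
  x \in top_regular -> y \in top_regular -> incomp x y -> Level x = Level y.
Proof.
move=> xG yG /andP[_ Hn]; case: (ltngtP (Level x) (Level y)) => // H.
- by move: Hn; rewrite /Order.comparable (ltW (top_regularP xG H)).
- by move: Hn; rewrite /Order.comparable (ltW (top_regularP yG H)) orbT.
Qed.

Lemma top_regular_trunk : is_trunk top_regular.
Proof.
move=> x y z xG yG zG _ _ xz Hxy Hyz; apply: same_Level_incomp => //.
by rewrite (top_regular_incomp_Level xG yG Hxy) (top_regular_incomp_Level yG zG Hyz).
Qed.

Section UpRegular.
Hypothesis ur : up_regular (T := T).

Lemma full_trunk_sub_top_regular S : is_full_trunk S -> S \subset top_regular.
Proof.
move=> [Str [C [HC CS]]]; apply/subsetP => x xS; rewrite inE.
apply/forallP => y; apply/implyP => Hxy.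
have [c' c'C Hc'] := max_chain_cover HC (Level_lt_Height y).
suff xc' : (x < c')%O by rewrite -(@ur x c' y) // Hc'.
apply: comparable_Level_lt; last by rewrite Hc'.
case: (boolP (x \in C)) => xC; first exact: (is_chainP _ HC.1).
have [c cC Hc] := max_chain_cover HC (Level_lt_Height x).
apply/negPn/negP => Hinc.
have cx : c != x by apply: contraNneq xC => <-.
have xc' : x != c' by apply: contraNneq xC => ->.
have cc' : c != c' by apply/eqP => E; move: Hxy; rewrite -Hc' -E Hc ltnn.
have := Str c x c' (subsetP CS _ cC) xS (subsetP CS _ c'C) cx xc' cc'
  (same_Level_incomp cx Hc) (introT andP (conj xc' Hinc)).
by rewrite /incomp (is_chainP _ HC.1 c c' cC c'C) andbF.
Qed.

Lemma top_regular_full_trunk : is_full_trunk top_regular.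
Proof.
split; first exact: top_regular_trunk.
have [C HC] := max_chain_ex; exists C; split => //.
exact: full_trunk_sub_top_regular (max_chain_full_trunk HC).
Qed.

Lemma top_regular_rel_max : is_rel_max_full_trunk top_regular.
Proof.
have maxG : is_maximal_full_trunk top_regular.
  split; first exact: top_regular_full_trunk.
  move=> S HS GS; apply/eqP; rewrite eqEsubset GS andbT.
  exact: full_trunk_sub_top_regular.
split=> // S [HS HSmax]; symmetry; apply: HSmax; first exact: top_regular_full_trunk.
exact: full_trunk_sub_top_regular.
Qed.

Lemma not_top_regular_gap x : x \notin top_regular ->
  (Level x).+1 < Height [set: T] /\ forall w, Level w = (Level x).+1 -> ~~ (x < w)%O.
Proof.
rewrite inE negb_forall => /existsP[y]; rewrite negb_imply => /andP[Hl Hn].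
have [z [zy Hz]] := Level_down Hl.
have xz : ~~ (x < z)%O by apply: contra Hn => /lt_le_trans; apply.
split; first by rewrite -Hz Level_lt_Height.
by move=> w Hw; rewrite -(@ur x z w) // Hz ?Hw.
Qed.

Lemma not_top_regular_lt_gap a b : a \notin top_regular -> (a < b)%O ->
  (Level a).+2 <= Level b.
Proof.
move=> aG ab; case: (eqVneq (Level b) (Level a).+1) => E.
  by move: ((not_top_regular_gap aG).2 b E); rewrite ab.
by rewrite ltn_neqAle eq_sym E lt_Level.
Qed.

(* A chain avoiding top_regular has at most half the height: the numbers
   Level a and Level a + 1 (a in D) are 2 |D| distinct levels below Height. *)
Lemma chain_outside_top_regular D :
  D \subset ~: top_regular -> is_chain D -> #|D| * 2 <= Height [set: T].
Proof.
move=> DG Dc.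
have nG a : a \in D -> a \notin top_regular by move/(subsetP DG); rewrite inE.
set s := map Level (enum D) ++ map (fun a => (Level a).+1) (enum D).
have Linj : {in enum D &, injective Level}.
  by move=> a b; rewrite !mem_enum; exact: chain_Level_inj.
have U : uniq s.
  rewrite cat_uniq (map_inj_in_uniq Linj) enum_uniq /=.
  rewrite map_inj_in_uniq ?enum_uniq ?andbT; last by move=> a b aD bD [/Linj]; apply.
  apply/hasPn => n /mapP[b bD ->]; apply/negP => /mapP[a aD E].
  move: aD bD; rewrite !mem_enum => aD bD; case: (eqVneq a b) => [ab|ab]; first by move: E; rewrite ab; lia.
  case/orP: (chain_lt_or Dc aD bD ab) => [/(not_top_regular_lt_gap (nG a aD))|
                                         /(not_top_regular_lt_gap (nG b bD))]; lia.
have Sub : {subset s <= iota 0 (Height [set: T])}.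
  move=> n; rewrite mem_cat => /orP[] /mapP[a aD ->]; rewrite mem_iota add0n.
    exact: Level_lt_Height.
  by rewrite mem_enum in aD; exact: (not_top_regular_gap (nG a aD)).1.
have := uniq_leq_size U Sub.
by rewrite size_iota size_cat !size_map -cardE muln2 -addnn.
Qed.

End UpRegular.
End Levels.

Theorem mainTheorem14 (d : Order.disp_t) (T : finPOrderType d) :
  up_regular (T := T) ->
  exists R : {set T}, is_rel_max_full_trunk R /\
    (Height (~: R) * 2 <= Height [set: T])%N.
Proof.
move=> ur; exists top_regular; split; first exact: top_regular_rel_max.
have [D [DG Dc <-]] := Height_witness (~: top_regular (T := T)).
exact: chain_outside_top_regular.
Qed.
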